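(* Let $\tau\in\mathcal{H}$ with $\Im(\tau)\ge\sqrt3/4$ and let $z\in\mathbb{C}$ with $0\le\Im(z)\le\Im(\tau)/4$. Then $$|\theta_{00}(z,\tau)-\theta_{01}(z,\tau)|<|\theta_{00}(z,\tau)+\theta_{01}(z,\tau)|;$$ consequently $\Re\left(\frac{\theta_{01}(z,\tau)}{\theta_{00}(z,\tau)}\right)>0$ and $\Re\left(\frac{\theta_{01}(0,\tau)}{\theta_{00}(0,\tau)}\right)>0$.
   Context: For $z\in\mathbb{C}$ and $\tau$ in the upper half-plane $\mathcal{H}=\{\tau\in\mathbb{C}:\Im\tau>0\}$, $\theta(z,\tau)=\sum_{n\in\mathbb{Z}}\exp(\pi i\tau n^2+2\pi i n z)$. Set $\theta_{00}(z,\tau)=\theta(z,\tau)$ and $\theta_{01}(z,\tau)=\theta(z+\tfrac12,\tau)$. (The paper states the hypothesis as $\Im\tau$ at least an unspecified constant which it notes is $\le\sqrt3/4$; here $\sqrt3/4$ is used.) *)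

From Stdlib Require Import Reals Lra ZArith ClassicalEpsilon.
Open Scope R_scope.

Definition Cplx : Type := (R * R)%type.
Definition Re (z : Cplx) : R := fst z.
Definition Im (z : Cplx) : R := snd z.
Definition Cadd (z w : Cplx) : Cplx := (Re z + Re w, Im z + Im w).
Definition Csub (z w : Cplx) : Cplx := (Re z - Re w, Im z - Im w).
Definition Cmul (z w : Cplx) : Cplx :=
  (Re z * Re w - Im z * Im w, Re z * Im w + Im z * Re w).
Definition Cinv (w : Cplx) : Cplx :=
  (Re w / (Re w ^ 2 + Im w ^ 2), - Im w / (Re w ^ 2 + Im w ^ 2)).
Definition Cdiv (z w : Cplx) : Cplx := Cmul z (Cinv w).
Definition Cmod (z : Cplx) : R := sqrt (Re z ^ 2 + Im z ^ 2).

Definition Cexp (z : Cplx) : Cplx := (exp (Re z) * cos (Im z), exp (Re z) * sin (Im z)).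

(* Limit of a real sequence (chosen classically; 0 if it does not converge). *)
Definition Rlim (u : nat -> R) : R :=
  match excluded_middle_informative (exists l, Un_cv u l) with
  | left H => proj1_sig (constructive_indefinite_description _ H)
  | right _ => 0
  end.

(* n-th term of the theta series: exp(pi i tau n^2 + 2 pi i n z).
   pi i tau n^2 + 2 pi i n z = (-pi Im tau n^2 - 2 pi n Im z) + i (pi Re tau n^2 + 2 pi n Re z). *)
Definition theta_term (z tau : Cplx) (n : Z) : Cplx :=
  Cexp (- PI * Im tau * IZR n ^ 2 - 2 * PI * IZR n * Im z,
        PI * Re tau * IZR n ^ 2 + 2 * PI * IZR n * Re z).

Definition theta_partial (z tau : Cplx) (N : nat) : Cplx :=
  (sum_f_R0 (fun k => Re (theta_term z tau (Z.of_nat k - Z.of_nat N)%Z)) (2 * N),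
   sum_f_R0 (fun k => Im (theta_term z tau (Z.of_nat k - Z.of_nat N)%Z)) (2 * N)).

(* theta(z,tau) = sum_{n in Z} exp(pi i tau n^2 + 2 pi i n z)
   (absolutely convergent for Im tau > 0, so equal to the limit of symmetric partial sums). *)
Definition theta (z tau : Cplx) : Cplx :=
  (Rlim (fun N => Re (theta_partial z tau N)), Rlim (fun N => Im (theta_partial z tau N))).

Definition theta00 (z tau : Cplx) : Cplx := theta z tau.
Definition theta01 (z tau : Cplx) : Cplx := theta (Re z + / 2, Im z) tau.

(* Sum and subtract the two series termwise.  Put [rho = exp (- PI Im tau / 2)];
   on the strip [0 <= Im z <= Im tau / 4] the [n]-th term of theta has modulus at
   most [rho ^ (2 n^2 - |n|)], and at most [rho ^ (2 n^2)] for [n >= 0].  Shifting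
   [z] by [1/2] multiplies the [n]-th term by [(-1)^n], so:
   - in [theta00 + theta01] the terms [n = 0] give [2] and the terms [n = +-1] cancel;
   - in [theta00 - theta01] the terms [n = 0] cancel and the terms [n = +-1] have
     modulus at most [2 rho + 2 rho^2];
   - in both, the terms [|n| >= 2] are bounded by [T = 4 rho^6 / (1 - rho^5)].
   For [Im tau >= sqrt 3 / 4] one has [rho <= 11/20], whence
   [|theta00 - theta01| <= 2 rho + 2 rho^2 + T < 2 - T <= Re (theta00 + theta01)]. *)

From Stdlib Require Import Reals Lra Lia Psatz ZArith ClassicalEpsilon.
From Coquelicot Require Complex.
Open Scope R_scope.

Lemma Un_cv_Rlim (u : nat -> R) : (exists l, Un_cv u l) -> Un_cv u (Rlim u).
Proof.
  intros hex; unfold Rlim.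
  destruct excluded_middle_informative as [h | h]; [| contradiction].
  exact (proj2_sig (constructive_indefinite_description _ h)).
Qed.

Lemma Un_cv_pow2 (u : nat -> R) (l : R) : Un_cv u l -> Un_cv (fun N => u N ^ 2) (l ^ 2).
Proof.
  intros hu; replace (l ^ 2) with (l * l) by ring.
  apply (Un_cv_ext (fun N => u N * u N)); [intros; ring | apply CV_mult; exact hu].
Qed.

Lemma Un_cv_const (c : R) : Un_cv (fun _ => c) c.
Proof.
  intros eps heps; exists 0%nat; intros n _.
  unfold Rdist; rewrite Rminus_diag, Rabs_R0; lra.
Qed.

Lemma geom_series_cv (c r : R) : 0 <= r < 1 ->
  Un_cv (sum_f_R0 (fun k => c * r ^ k)) (c / (1 - r)).
Proof.
  intros hr.
  assert (hgp : Un_cv (sum_f_R0 (fun k => 1 * r ^ k)) (/ (1 - r))).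
  { apply GP_infinite; rewrite Rabs_pos_eq; lra. }
  apply (Un_cv_ext (fun N => c * sum_f_R0 (fun k => 1 * r ^ k) N)).
  - intros N; rewrite scal_sum; apply sum_eq; intros; ring.
  - apply (CV_mult _ _ c (/ (1 - r))); [apply Un_cv_const | exact hgp].
Qed.

Lemma sum_geom_le (c r : R) (N : nat) : 0 <= c -> 0 <= r < 1 ->
  sum_f_R0 (fun k => c * r ^ k) N <= c / (1 - r).
Proof.
  intros hc hr.
  apply sum_incr; [apply geom_series_cv, hr |].
  intros k; apply Rmult_le_pos; [exact hc | apply pow_le; lra].
Qed.

(* Split [a = (a + b) - b] with [b k = c r^k], so that [0 <= a + b <= 2 b]. *)
Lemma series_cv_of_abs_le_geom (a : nat -> R) (c r : R) : 0 <= r < 1 ->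
  (forall k, Rabs (a k) <= c * r ^ k) -> exists l, Un_cv (sum_f_R0 a) l.
Proof.
  intros hr ha.
  destruct (Rseries_CV_comp (fun k => a k + c * r ^ k) (fun k => 2 * c * r ^ k))
    as [l hl].
  - intros k; specialize (ha k); pose proof (Rle_abs (a k)); pose proof (Rle_abs (- a k)).
    rewrite Rabs_Ropp in *; lra.
  - exists (2 * c / (1 - r)); apply geom_series_cv, hr.
  - exists (l - c / (1 - r)).
    apply (Un_cv_ext (fun N => sum_f_R0 (fun k => a k + c * r ^ k) N
                               - sum_f_R0 (fun k => c * r ^ k) N)).
    + intros N; rewrite <- minus_sum; apply sum_eq; intros; ring.
    + apply CV_minus; [exact hl | apply geom_series_cv, hr].
Qed.

Lemma Cmod_ge_0 (u : Cplx) : 0 <= Cmod u.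
Proof. exact (Complex.Cmod_ge_0 u). Qed.

Lemma Cmod_pow2 (u : Cplx) : Cmod u ^ 2 = Re u ^ 2 + Im u ^ 2.
Proof. exact (Complex.Cmod2_alt u). Qed.

Lemma Cmod_add_le (u v : Cplx) : Cmod (Cadd u v) <= Cmod u + Cmod v.
Proof. exact (Complex.Cmod_triangle u v). Qed.

Lemma Cmod_sub_le (u v : Cplx) : Cmod (Csub u v) <= Cmod u + Cmod v.
Proof.
  eapply Rle_trans; [exact (Complex.Cmod_triangle u (Complex.Copp v)) |].
  rewrite Complex.Cmod_opp; apply Rle_refl.
Qed.

Lemma Rabs_Re_le_Cmod (u : Cplx) : Rabs (Re u) <= Cmod u.
Proof. pose proof (Cmod_pow2 u); pose proof (Cmod_ge_0 u); apply Rabs_le; split; nra. Qed.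

Lemma Rabs_Im_le_Cmod (u : Cplx) : Rabs (Im u) <= Cmod u.
Proof. pose proof (Cmod_pow2 u); pose proof (Cmod_ge_0 u); apply Rabs_le; split; nra. Qed.

Lemma Re_le_Cmod (u : Cplx) : Re u <= Cmod u.
Proof. eapply Rle_trans; [apply Rle_abs | apply Rabs_Re_le_Cmod]. Qed.

(* Since [|A + B|^2 - |A - B|^2 = 4 Re (A conj B)] and [Re (B / A) = Re (conj A B) / |A|^2]. *)
Lemma Re_div_pos (A B : Cplx) : Cmod (Csub A B) < Cmod (Cadd A B) -> 0 < Re (Cdiv B A).
Proof.
  intros hlt.
  assert (hsq : Cmod (Csub A B) ^ 2 < Cmod (Cadd A B) ^ 2).
  { pose proof (Cmod_ge_0 (Csub A B)); nra. }
  rewrite !Cmod_pow2 in hsq.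
  destruct A as [a b], B as [c d]; clear hlt.
  unfold Cdiv, Cmul, Cinv, Csub, Cadd, Re, Im in *; cbn [fst snd] in *.
  assert (hdot : 0 < a * c + b * d) by nra.
  assert (hA : 0 < a ^ 2 + b ^ 2).
  { destruct (Rle_lt_dec (a ^ 2 + b ^ 2) 0) as [h0 | h0]; [| exact h0].
    assert (a = 0) by nra; assert (b = 0) by nra; subst; lra. }
  replace (c * (a / (a ^ 2 + b ^ 2)) - d * (- b / (a ^ 2 + b ^ 2)))
    with ((a * c + b * d) / (a ^ 2 + b ^ 2)) by (field; lra).
  apply Rdiv_lt_0_compat; assumption.
Qed.

Lemma Cmod_Cexp (u v : R) : Cmod (Cexp (u, v)) = exp u.
Proof.
  unfold Cmod, Cexp, Re, Im; cbn [fst snd].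
  replace ((exp u * cos v) ^ 2 + (exp u * sin v) ^ 2) with (exp u ^ 2)
    by (pose proof (sin2_cos2 v) as h; unfold Rsqr in h; nra).
  apply sqrt_pow2, Rlt_le, exp_pos.
Qed.

Definition Ccv (u : nat -> Cplx) (l : Cplx) : Prop :=
  Un_cv (fun N => Re (u N)) (Re l) /\ Un_cv (fun N => Im (u N)) (Im l).

Lemma Ccv_shift2 (u : nat -> Cplx) (l : Cplx) : Ccv u l -> Ccv (fun N => u (S (S N))) l.
Proof.
  intros [hre him]; split;
    [apply (CV_shift' _ 2) in hre | apply (CV_shift' _ 2) in him];
    (eapply Un_cv_ext; [| eassumption]); intros N; cbv beta;
    rewrite Nat.add_comm; reflexivity.
Qed.

Lemma Re_ge_of_Ccv (u : nat -> Cplx) (l : Cplx) (m : R) :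
  Ccv u l -> (forall N, m <= Re (u N)) -> m <= Re l.
Proof. intros [hre _] hm; exact (Rle_cv_lim hm (Un_cv_const m) hre). Qed.

Lemma Cmod_le_of_Ccv (u : nat -> Cplx) (l : Cplx) (M : R) :
  Ccv u l -> (forall N, Cmod (u N) <= M) -> Cmod l <= M.
Proof.
  intros [hre him] hM.
  assert (hM0 : 0 <= M) by (eapply Rle_trans; [apply sqrt_pos | exact (hM 0%nat)]).
  assert (hsq : Re l ^ 2 + Im l ^ 2 <= M ^ 2).
  { apply (Rle_cv_lim (Un := fun N => Re (u N) ^ 2 + Im (u N) ^ 2) (Vn := fun _ => M ^ 2)).
    - intros N; rewrite <- Cmod_pow2; apply pow_incr; split; [apply sqrt_pos | apply hM].
    - apply CV_plus; apply Un_cv_pow2; assumption.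
    - apply Un_cv_const. }
  unfold Cmod; rewrite <- (sqrt_pow2 M hM0); apply sqrt_le_1_alt, hsq.
Qed.

Definition sym_pair (f : Z -> R) (k : nat) : R :=
  match k with
  | O => f 0%Z
  | S _ => f (Z.of_nat k) + f (- Z.of_nat k)%Z
  end.

Lemma sum_centered_eq_sum_sym_pair (f : Z -> R) (N : nat) :
  sum_f_R0 (fun k => f (Z.of_nat k - Z.of_nat N)%Z) (2 * N) = sum_f_R0 (sym_pair f) N.
Proof.
  induction N as [| N IH]; [reflexivity |].
  replace (2 * S N)%nat with (S (S (2 * N))) by lia.
  rewrite decomp_sum by lia; cbn [Init.Nat.pred]; rewrite tech5, tech5, <- IH.
  rewrite (sum_eq _ (fun k => f (Z.of_nat k - Z.of_nat N)%Z))
    by (intros i _; f_equal; lia).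
  replace (Z.of_nat 0 - Z.of_nat (S N))%Z with (- Z.of_nat (S N))%Z by lia.
  replace (Z.of_nat (S (S (2 * N))) - Z.of_nat (S N))%Z with (Z.of_nat (S N)) by lia.
  cbn [sym_pair]; ring.
Qed.

Lemma sym_pair_add (f g : Z -> R) (k : nat) :
  sym_pair (fun n => f n + g n) k = sym_pair f k + sym_pair g k.
Proof. destruct k; cbn [sym_pair]; ring. Qed.

Lemma sym_pair_sub (f g : Z -> R) (k : nat) :
  sym_pair (fun n => f n - g n) k = sym_pair f k - sym_pair g k.
Proof. destruct k; cbn [sym_pair]; ring. Qed.

Lemma Rabs_sym_pair_le (f : Z -> R) (c r : R) :
  (forall k : nat, Rabs (f (Z.of_nat k)) <= c * r ^ k /\ Rabs (f (- Z.of_nat k)%Z) <= c * r ^ k) ->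
  forall k, Rabs (sym_pair f k) <= 2 * c * r ^ k.
Proof.
  intros hf [| k]; cbn [sym_pair].
  - destruct (hf 0%nat) as [h0 _]; pose proof (Rabs_pos (f 0%Z)); simpl in *; lra.
  - destruct (hf (S k)) as [hp hm].
    eapply Rle_trans; [apply Rabs_triang | lra].
Qed.

Lemma Rlim_centered_sum (f : Z -> R) (c r : R) : 0 <= r < 1 ->
  (forall k : nat, Rabs (f (Z.of_nat k)) <= c * r ^ k /\ Rabs (f (- Z.of_nat k)%Z) <= c * r ^ k) ->
  Un_cv (sum_f_R0 (sym_pair f))
        (Rlim (fun N => sum_f_R0 (fun k => f (Z.of_nat k - Z.of_nat N)%Z) (2 * N))).
Proof.
  intros hr hf.
  apply (Un_cv_ext (fun N => sum_f_R0 (fun k => f (Z.of_nat k - Z.of_nat N)%Z) (2 * N)));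
    [intros N; apply sum_centered_eq_sum_sym_pair |].
  apply Un_cv_Rlim.
  destruct (series_cv_of_abs_le_geom (sym_pair f) (2 * c) r hr (Rabs_sym_pair_le f c r hf))
    as [l hl].
  exists l; eapply Un_cv_ext; [| exact hl].
  intros N; symmetry; apply sum_centered_eq_sum_sym_pair.
Qed.

Definition csum (F : nat -> Cplx) (N : nat) : Cplx :=
  (sum_f_R0 (fun k => Re (F k)) N, sum_f_R0 (fun k => Im (F k)) N).

Definition csym_pair (F : Z -> Cplx) (k : nat) : Cplx :=
  (sym_pair (fun n => Re (F n)) k, sym_pair (fun n => Im (F n)) k).

Lemma csym_pair_S (F : Z -> Cplx) (k : nat) :
  csym_pair F (S k) = Cadd (F (Z.of_nat (S k))) (F (- Z.of_nat (S k))%Z).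
Proof. reflexivity. Qed.

Lemma Cmod_csum_le (F : nat -> Cplx) (N : nat) :
  Cmod (csum F N) <= sum_f_R0 (fun k => Cmod (F k)) N.
Proof.
  induction N as [| N IH]; [apply Rle_refl |].
  change (csum F (S N)) with (Cadd (csum F N) (F (S N))); cbn [sum_f_R0].
  eapply Rle_trans; [apply Cmod_add_le |].
  apply Rplus_le_compat_r, IH.
Qed.

Lemma csum_SS (F : nat -> Cplx) (N : nat) :
  csum F (S (S N)) = Cadd (Cadd (F 0%nat) (F 1%nat)) (csum (fun k => F (S (S k))) N).
Proof.
  unfold csum, Cadd, Re, Im; cbn [fst snd].
  rewrite !(decomp_sum _ (S (S N))), !(decomp_sum _ (S N)) by lia; cbn [Init.Nat.pred].
  f_equal; ring.
Qed.

Lemma Ccv_csym_add (F G : Z -> Cplx) (l m : Cplx) :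
  Ccv (csum (csym_pair F)) l -> Ccv (csum (csym_pair G)) m ->
  Ccv (csum (csym_pair (fun n => Cadd (F n) (G n)))) (Cadd l m).
Proof.
  intros [hFr hFi] [hGr hGi]; split; (eapply Un_cv_ext; [| apply CV_plus; eassumption]);
    intros N; unfold csum, csym_pair, Cadd, Re, Im; cbn [fst snd];
    rewrite <- plus_sum; apply sum_eq; intros; rewrite sym_pair_add; reflexivity.
Qed.

Lemma Ccv_csym_sub (F G : Z -> Cplx) (l m : Cplx) :
  Ccv (csum (csym_pair F)) l -> Ccv (csum (csym_pair G)) m ->
  Ccv (csum (csym_pair (fun n => Csub (F n) (G n)))) (Csub l m).
Proof.
  intros [hFr hFi] [hGr hGi]; split; (eapply Un_cv_ext; [| apply CV_minus; eassumption]);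
    intros N; unfold csum, csym_pair, Csub, Re, Im; cbn [fst snd];
    rewrite <- minus_sum; apply sum_eq; intros; rewrite sym_pair_sub; reflexivity.
Qed.

(** * The terms of the theta series *)

Lemma exp_mult_INR (x : R) (k : nat) : exp (x * INR k) = exp x ^ k.
Proof.
  induction k as [| k IH].
  - rewrite Rmult_0_r, exp_0; reflexivity.
  - rewrite S_INR, Rmult_plus_distr_l, Rmult_1_r, exp_plus, IH; simpl; ring.
Qed.

Lemma exp_le (a b : R) : a <= b -> exp a <= exp b.
Proof. intros [h | ->]; [left; apply exp_increasing, h | apply Rle_refl]. Qed.

Lemma pow_le_pow_of_le_1 (x : R) (m n : nat) : 0 <= x <= 1 -> (n <= m)%nat -> x ^ m <= x ^ n.
Proof.
  intros hx hnm; replace m with (n + (m - n))%nat by lia; rewrite pow_add.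
  rewrite <- (Rmult_1_r (x ^ n)) at 2.
  apply Rmult_le_compat_l; [apply pow_le; lra |].
  rewrite <- (pow1 (m - n)); apply pow_incr; lra.
Qed.

(* [rho tau] is the square root of the modulus [exp (- PI Im tau)] of the nome. *)
Definition rho (tau : Cplx) : R := exp (- (PI * Im tau / 2)).

Lemma rho_pow (tau : Cplx) (m : nat) : rho tau ^ m = exp (- (PI * Im tau / 2) * INR m).
Proof. unfold rho; rewrite exp_mult_INR; reflexivity. Qed.

Lemma rho_pos (tau : Cplx) : 0 < rho tau.
Proof. apply exp_pos. Qed.

Lemma rho_lt_1 (tau : Cplx) : 0 < Im tau -> rho tau < 1.
Proof.
  intros ht; unfold rho; rewrite <- exp_0; apply exp_increasing.
  pose proof PI_RGT_0; nra.
Qed.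

Lemma sqrt3_ge : 1732 / 1000 <= sqrt 3.
Proof.
  rewrite <- (sqrt_pow2 (1732 / 1000)) by lra.
  apply sqrt_le_1_alt; lra.
Qed.

Lemma rho_le (tau : Cplx) : sqrt 3 / 4 <= Im tau -> rho tau <= 11 / 20.
Proof.
  intros ht; unfold rho; rewrite exp_Ropp.
  set (x := PI * Im tau / 2).
  assert (hx : 1299 / 2000 <= x) by (pose proof sqrt3_ge; pose proof PI2_3_2; unfold x; nra).
  assert (hexp : (1 + 1299 / 16000) ^ 8 <= exp x).
  { replace x with (8 * (x / 8)) by field; rewrite Rmult_comm.
    replace 8 with (INR 8) at 2 by (simpl; ring); rewrite exp_mult_INR.
    apply pow_incr; split; [lra |].
    eapply Rle_trans; [| apply exp_ineq1_le]; lra. }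
  replace (11 / 20) with (/ (20 / 11)) by field.
  apply Rinv_le_contravar; [lra |]; simpl in hexp; lra.
Qed.

Lemma Cmod_theta_term (z tau : Cplx) (n : Z) :
  Cmod (theta_term z tau n) = exp (- PI * Im tau * IZR n ^ 2 - 2 * PI * IZR n * Im z).
Proof. apply Cmod_Cexp. Qed.

Lemma Cmod_theta_term_nat_le (z tau : Cplx) (k : nat) : 0 <= Im z ->
  Cmod (theta_term z tau (Z.of_nat k)) <= rho tau ^ (2 * k * k).
Proof.
  intros hz; rewrite Cmod_theta_term, rho_pow, <- INR_IZR_INZ; apply exp_le.
  rewrite !mult_INR; change (INR 2) with 2.
  pose proof (pos_INR k); pose proof PI_RGT_0.
  assert (0 <= PI * INR k * Im z) by (apply Rmult_le_pos; [apply Rmult_le_pos |]; lra).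
  nra.
Qed.

Lemma Cmod_theta_term_opp_nat_le (z tau : Cplx) (k : nat) : Im z <= Im tau / 4 ->
  Cmod (theta_term z tau (- Z.of_nat k)) <= rho tau ^ (2 * k * k - k).
Proof.
  intros hz; rewrite Cmod_theta_term, rho_pow, opp_IZR, <- INR_IZR_INZ; apply exp_le.
  rewrite minus_INR by nia; rewrite !mult_INR; change (INR 2) with 2.
  pose proof (pos_INR k); pose proof PI_RGT_0.
  assert (PI * INR k * Im z <= PI * INR k * (Im tau / 4))
    by (apply Rmult_le_compat_l; [apply Rmult_le_pos |]; lra).
  nra.
Qed.

Lemma Cmod_theta_term_le (z tau : Cplx) (k : nat) (n : Z) :
  0 < Im tau -> 0 <= Im z <= Im tau / 4 -> (n = Z.of_nat k \/ n = - Z.of_nat k)%Z ->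
  Cmod (theta_term z tau n) <= rho tau ^ (2 * k * k - k).
Proof.
  intros ht hz [-> | ->]; [| apply Cmod_theta_term_opp_nat_le; lra].
  eapply Rle_trans; [apply Cmod_theta_term_nat_le; lra |].
  apply pow_le_pow_of_le_1; [pose proof (rho_pos tau); pose proof (rho_lt_1 tau ht); lra | lia].
Qed.

Lemma theta_Ccv (z tau : Cplx) : 0 < Im tau -> 0 <= Im z <= Im tau / 4 ->
  Ccv (csum (csym_pair (theta_term z tau))) (theta z tau).
Proof.
  intros ht hz.
  assert (hr : 0 <= rho tau < 1) by (split; [apply Rlt_le, rho_pos | apply rho_lt_1, ht]).
  assert (hterm : forall (k : nat) (n : Z), (n = Z.of_nat k \/ n = - Z.of_nat k)%Z ->
            Cmod (theta_term z tau n) <= 1 * rho tau ^ k).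
  { intros k n hn; rewrite Rmult_1_l.
    eapply Rle_trans; [apply (Cmod_theta_term_le z tau k n ht hz hn) |].
    apply pow_le_pow_of_le_1; [lra | nia]. }
  split.
  - refine (Rlim_centered_sum (fun n => Re (theta_term z tau n)) 1 (rho tau) hr _).
    intros k; split; (eapply Rle_trans; [apply Rabs_Re_le_Cmod | apply hterm; auto]).
  - refine (Rlim_centered_sum (fun n => Im (theta_term z tau n)) 1 (rho tau) hr _).
    intros k; split; (eapply Rle_trans; [apply Rabs_Im_le_Cmod | apply hterm; auto]).
Qed.

Lemma theta_term_0 (z tau : Cplx) : theta_term z tau 0%Z = (1, 0).
Proof.
  unfold theta_term, Cexp, Re, Im; cbn [fst snd IZR].
  replace (- PI * snd tau * 0 ^ 2 - 2 * PI * 0 * snd z) with 0 by ring.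
  replace (PI * fst tau * 0 ^ 2 + 2 * PI * 0 * fst z) with 0 by ring.
  rewrite exp_0, cos_0, sin_0; f_equal; ring.
Qed.

Definition shift_half (z : Cplx) : Cplx := (Re z + / 2, Im z).

Lemma theta_term_shift_half_1 (z tau : Cplx) :
  theta_term (shift_half z) tau 1%Z
  = (- Re (theta_term z tau 1%Z), - Im (theta_term z tau 1%Z)).
Proof.
  unfold theta_term, shift_half, Cexp, Re, Im; cbn [fst snd IZR].
  replace (PI * fst tau * 1 ^ 2 + 2 * PI * 1 * (fst z + / 2))
    with (PI * fst tau * 1 ^ 2 + 2 * PI * 1 * fst z + PI) by field.
  rewrite neg_cos, neg_sin; f_equal; ring.
Qed.

Lemma theta_term_shift_half_m1 (z tau : Cplx) :
  theta_term (shift_half z) tau (-1)%Z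
  = (- Re (theta_term z tau (-1)%Z), - Im (theta_term z tau (-1)%Z)).
Proof.
  unfold theta_term, shift_half, Cexp, Re, Im; cbn [fst snd IZR].
  set (w := PI * fst tau * (-1) ^ 2 + 2 * PI * -1 * fst z).
  replace (PI * fst tau * (-1) ^ 2 + 2 * PI * -1 * (fst z + / 2)) with (w - PI)
    by (unfold w; field).
  replace (cos w) with (cos (w - PI + PI)) by (f_equal; ring).
  replace (sin w) with (sin (w - PI + PI)) by (f_equal; ring).
  rewrite neg_cos, neg_sin; f_equal; ring.
Qed.

(** * Estimates for theta00 +- theta01 *)

(* Since [2 k^2 - k >= 5 k - 4], the terms [n = +-k], [k >= 2], of [theta00 +- theta01]
   are at most [4 rho^6 (rho^5)^(k-2)]; [theta_tail rho] is the sum of these bounds. *)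
Definition theta_tail (q : R) : R := 4 * q ^ 6 / (1 - q ^ 5).

Lemma theta_tail_small (q : R) : 0 < q <= 11 / 20 ->
  2 * q + 2 * q ^ 2 + theta_tail q < 2 - theta_tail q.
Proof.
  intros hq; unfold theta_tail.
  assert (hpow : forall n, q ^ n <= (11 / 20) ^ n) by (intros n; apply pow_incr; lra).
  assert (h2 : q ^ 2 <= 121 / 400) by (eapply Rle_trans; [apply hpow | simpl; lra]).
  assert (h5 : q ^ 5 <= 1 / 16) by (eapply Rle_trans; [apply hpow | simpl; lra]).
  assert (h6 : q ^ 6 <= 1 / 36) by (eapply Rle_trans; [apply hpow | simpl; lra]).
  assert (hq5 : 0 <= q ^ 5) by (apply pow_le; lra).
  assert (htail : 4 * q ^ 6 / (1 - q ^ 5) <= 4 * q ^ 6 * (16 / 15)).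
  { apply (Rmult_le_reg_r (1 - q ^ 5)); [lra |].
    unfold Rdiv; rewrite Rmult_assoc, Rinv_l, Rmult_1_r by lra.
    assert (0 <= q ^ 6) by (apply pow_le; lra); nra. }
  lra.
Qed.

Section Estimates.

Variables (z tau : Cplx).
Hypothesis htau : 0 < Im tau.
Hypothesis hz : 0 <= Im z <= Im tau / 4.

Lemma Cmod_csum_tail_le (F : Z -> Cplx) :
  (forall n, Cmod (F n) <= Cmod (theta_term z tau n) + Cmod (theta_term (shift_half z) tau n)) ->
  forall N, Cmod (csum (fun k => csym_pair F (S (S k))) N) <= theta_tail (rho tau).
Proof.
  intros hF N.
  pose proof (rho_pos tau) as hq0; pose proof (rho_lt_1 tau htau) as hq1.
  assert (hq5 : 0 <= rho tau ^ 5 < 1).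
  { split; [apply pow_le; lra |].
    apply pow_lt_1_compat; [lra | lia]. }
  eapply Rle_trans; [apply Cmod_csum_le |].
  eapply Rle_trans; [| apply (sum_geom_le (4 * rho tau ^ 6) (rho tau ^ 5) N);
                       [apply Rmult_le_pos; [lra | apply pow_le; lra] | exact hq5]].
  apply sum_Rle; intros k _; rewrite csym_pair_S.
  assert (hterm : forall n, (n = Z.of_nat (S (S k)) \/ n = - Z.of_nat (S (S k)))%Z ->
            Cmod (F n) <= 2 * (rho tau ^ 6 * (rho tau ^ 5) ^ k)).
  { intros n hn; rewrite <- pow_mult, <- pow_add.
    assert (hexp : rho tau ^ (2 * S (S k) * S (S k) - S (S k)) <= rho tau ^ (6 + 5 * k))
      by (apply pow_le_pow_of_le_1; [lra | nia]).
    pose proof (Cmod_theta_term_le z tau (S (S k)) n htau hz hn).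
    pose proof (Cmod_theta_term_le (shift_half z) tau (S (S k)) n htau hz hn).
    specialize (hF n); lra. }
  eapply Rle_trans; [apply Cmod_add_le |].
  pose proof (hterm _ (or_introl eq_refl)); pose proof (hterm _ (or_intror eq_refl)); lra.
Qed.

Lemma Cmod_theta_sub_partial_le (N : nat) :
  Cmod (csum (csym_pair (fun n => Csub (theta_term z tau n) (theta_term (shift_half z) tau n)))
             (S (S N)))
  <= 2 * rho tau + 2 * rho tau ^ 2 + theta_tail (rho tau).
Proof.
  set (D := fun n => Csub (theta_term z tau n) (theta_term (shift_half z) tau n)).
  rewrite csum_SS.
  pose proof (Cmod_csum_tail_le D (fun n => Cmod_sub_le _ _) N) as htail.
  assert (hD0 : Cmod (csym_pair D 0) = 0).
  { unfold csym_pair, D; cbn [sym_pair]; rewrite !theta_term_0.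
    unfold Cmod, Csub, Re, Im; cbn [fst snd].
    replace ((1 - 1) ^ 2 + (0 - 0) ^ 2) with 0 by ring; apply sqrt_0. }
  assert (hD1 : Cmod (csym_pair D 1) <= 2 * rho tau + 2 * rho tau ^ 2).
  { rewrite csym_pair_S; eapply Rle_trans; [apply Cmod_add_le |].
    pose proof (Cmod_sub_le (theta_term z tau 1%Z) (theta_term (shift_half z) tau 1%Z)).
    pose proof (Cmod_sub_le (theta_term z tau (-1)%Z) (theta_term (shift_half z) tau (-1)%Z)).
    pose proof (Cmod_theta_term_nat_le z tau 1 (proj1 hz)).
    pose proof (Cmod_theta_term_nat_le (shift_half z) tau 1 (proj1 hz)).
    pose proof (Cmod_theta_term_opp_nat_le z tau 1 (proj2 hz)).
    pose proof (Cmod_theta_term_opp_nat_le (shift_half z) tau 1 (proj2 hz)).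
    simpl in *; unfold D; lra. }
  eapply Rle_trans; [apply Cmod_add_le |].
  eapply Rle_trans; [apply Rplus_le_compat_r, Cmod_add_le |].
  lra.
Qed.

Lemma Re_theta_add_partial_ge (N : nat) :
  2 - theta_tail (rho tau)
  <= Re (csum (csym_pair (fun n => Cadd (theta_term z tau n) (theta_term (shift_half z) tau n)))
              (S (S N))).
Proof.
  set (E := fun n => Cadd (theta_term z tau n) (theta_term (shift_half z) tau n)).
  rewrite csum_SS.
  pose proof (Cmod_csum_tail_le E (fun n => Cmod_add_le _ _) N) as htail.
  set (T := csum (fun k => csym_pair E (S (S k))) N) in *.
  pose proof (Rabs_Re_le_Cmod T) as hre.
  pose proof (Rle_abs (- Re T)) as habs; rewrite Rabs_Ropp in habs.
  assert (hE0 : Re (csym_pair E 0) = 2).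
  { unfold csym_pair, E; cbn [sym_pair]; rewrite !theta_term_0; unfold Cadd, Re; cbn [fst]; ring. }
  assert (hE1 : Re (csym_pair E 1) = 0).
  { rewrite csym_pair_S; unfold E; change (Z.of_nat 1) with 1%Z; change (Z.opp 1) with (Zneg 1).
    rewrite theta_term_shift_half_1, theta_term_shift_half_m1.
    unfold Cadd, Re, Im; cbn [fst snd]; ring. }
  change (Re (Cadd (Cadd (csym_pair E 0) (csym_pair E 1)) T))
    with (Re (csym_pair E 0) + Re (csym_pair E 1) + Re T).
  lra.
Qed.

Lemma Cmod_theta00_sub_theta01_lt : sqrt 3 / 4 <= Im tau ->
  Cmod (Csub (theta00 z tau) (theta01 z tau)) < Cmod (Cadd (theta00 z tau) (theta01 z tau)).
Proof.
  intros h3.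
  pose proof (theta_Ccv z tau htau hz) as h00.
  pose proof (theta_Ccv (shift_half z) tau htau hz) as h01.
  assert (hsub : Cmod (Csub (theta00 z tau) (theta01 z tau))
                 <= 2 * rho tau + 2 * rho tau ^ 2 + theta_tail (rho tau)).
  { eapply Cmod_le_of_Ccv; [apply Ccv_shift2, Ccv_csym_sub; eassumption |].
    apply Cmod_theta_sub_partial_le. }
  assert (hadd : 2 - theta_tail (rho tau) <= Re (Cadd (theta00 z tau) (theta01 z tau))).
  { eapply Re_ge_of_Ccv; [apply Ccv_shift2, Ccv_csym_add; eassumption |].
    apply Re_theta_add_partial_ge. }
  pose proof (Re_le_Cmod (Cadd (theta00 z tau) (theta01 z tau))).
  pose proof (theta_tail_small (rho tau) (conj (rho_pos tau) (rho_le tau h3))).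
  lra.
Qed.

End Estimates.

Theorem mainTheorem5 (z tau : Cplx) :
  0 < Im tau ->
  sqrt 3 / 4 <= Im tau ->
  0 <= Im z <= Im tau / 4 ->
  Cmod (Csub (theta00 z tau) (theta01 z tau)) < Cmod (Cadd (theta00 z tau) (theta01 z tau)) /\
  0 < Re (Cdiv (theta01 z tau) (theta00 z tau)) /\
  0 < Re (Cdiv (theta01 (0, 0) tau) (theta00 (0, 0) tau)).
Proof.
  intros htau h3 hz.
  assert (h0 : 0 <= Im (0, 0) <= Im tau / 4) by (change (Im (0, 0)) with 0; lra).
  pose proof (Cmod_theta00_sub_theta01_lt z tau htau hz h3) as hlt.
  split; [exact hlt | split; apply Re_div_pos; [exact hlt |]].
  exact (Cmod_theta00_sub_theta01_lt (0, 0) tau htau h0 h3).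
Qed.
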